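(* Let $(\xi,\sigma)$ be a (sufficiently regular, global) solution of the normalized flow described below on $[0,\infty)\times\mathbb S^1$. Then: (i) $\tau\mapsto\int_0^1|\xi(\tau,s)|^2ds$ is monotone increasing, and $\int_0^1|\xi(\tau,s)|^2ds\le\frac1{4\pi^2}$ for all $\tau$; (ii) $\tau\mapsto\int_0^1\sigma(\tau,s)\,ds$ is monotone increasing, and $\int_0^1\sigma(\tau,s)\,ds\le\int_0^1|\xi(\tau,s)|^2ds$ for all $\tau$; (iii) the limits as $\tau\to\infty$ of $\int_0^1\sigma(\tau,s)\,ds$ and of $\int_0^1|\xi(\tau,s)|^2ds$ exist and coincide.
   Context: $\mathbb S^1=\mathbb R/\mathbb Z$, $d\ge2$. The normalized flow: $\xi:[0,\infty)\times\mathbb S^1\to\mathbb R^d$ and $\sigma:[0,\infty)\times\mathbb S^1\to\mathbb R$ with $|\partial_s\xi(\tau,s)|=1$ and $\int_0^1\xi(\tau,s)\,ds=0$ for all $(\tau,s)$, satisfying $$\partial_\tau\xi=\partial_s(\sigma\partial_s\xi)+\xi,\qquad \partial_{ss}\sigma-\sigma|\partial_{ss}\xi|^2=-1,\ \ \sigma(\tau,\cdot)\ \text{periodic on } \mathbb S^1.$$ *)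

From Stdlib Require Import Reals.
From Coquelicot Require Import Coquelicot.
Open Scope R_scope.

(* A curve in R^d is represented by its components xi i, i < d (components
   with index >= d are irrelevant).  Functions of (tau, s) : R * R, with
   s-periodicity of period 1 encoding S^1 = R/Z. *)

Definition d_s (f : R -> R -> R) : R -> R -> R :=
  fun t s => Derive (fun s' => f t s') s.
Definition d_t (f : R -> R -> R) : R -> R -> R :=
  fun t s => Derive (fun t' => f t' s) t.

Fixpoint Dts (m n : nat) (f : R -> R -> R) : R -> R -> R :=
  match n with
  | O => Nat.iter m d_t f
  | S n' => d_s (Dts m n' f)
  end.

Definition smooth2 (f : R -> R -> R) : Prop :=
  forall m n : nat,
    (forall t s, ex_derive (fun s' => Dts m n f t s') s) /\
    (forall t s, ex_derive (fun t' => Dts m n f t' s) t) /\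
    (forall t s, continuous (fun p : R * R => Dts m n f (fst p) (snd p)) (t, s)).

Definition sumd (d : nat) (g : nat -> R) : R :=
  match d with O => 0 | S k => sum_f_R0 g k end.

Definition sqnorm (d : nat) (xi : nat -> R -> R -> R) (t s : R) : R :=
  sumd d (fun i => (xi i t s) ^ 2).

Definition normalized_flow (d : nat) (xi : nat -> R -> R -> R)
    (sigma : R -> R -> R) : Prop :=
  (forall i, (i < d)%nat -> smooth2 (xi i)) /\
  smooth2 sigma /\
  (forall i t s, (i < d)%nat -> xi i t (s + 1) = xi i t s) /\
  (forall t s, sigma t (s + 1) = sigma t s) /\
  (forall t s, 0 <= t -> sumd d (fun i => (d_s (xi i) t s) ^ 2) = 1) /\
  (forall i t, (i < d)%nat -> 0 <= t -> RInt (fun s => xi i t s) 0 1 = 0) /\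
  (forall i t s, (i < d)%nat -> 0 <= t ->
     d_t (xi i) t s =
     d_s (fun t' s' => sigma t' s' * d_s (xi i) t' s') t s + xi i t s) /\
  (forall t s, 0 <= t ->
     d_s (d_s sigma) t s
     - sigma t s * sumd d (fun i => (d_s (d_s (xi i)) t s) ^ 2) = -1).

From Stdlib Require Import Reals Lra Lia.
From Coquelicot Require Import Coquelicot.
Open Scope R_scope.

(* Write vel = d_t xi - xi, which along the flow equals d_s (sigma d_s xi).  Integrating by parts
   over the circle and using |d_s xi| = 1 and the equation for sigma gives
     int <xi, vel> = - int sigma   and   int |vel|^2 = int sigma,
   hence E' = 2 (E - S) and E - S = int |d_t xi|^2 >= 0, so E increases; E <= 1/(4 pi^2) is
   Wirtinger's inequality for the mean-zero components of the unit-speed curve.  Since S = int |vel|^2,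
   a further integration by parts gives S' = 2 int sigma |d_s d_t xi|^2, which is nonnegative because
   the minimum principle for sigma'' = sigma |xi_ss|^2 - 1 forces sigma > 0.  Both functions are then
   monotone and bounded, and E' = 2 (E - S) forbids a gap between their limits. *)

(* Coquelicot states its calculus over abstract normed modules; the instances at R below let
   apply, rewrite and ring work on real-valued terms. *)

Lemma continuous_sqr (f : R -> R) x : continuous f x -> continuous (fun y => f y ^ 2) x.
Proof.
  intros H. apply continuous_ext with (fun y => f y * f y); [intros; simpl; ring|].
  now apply (continuous_mult f f).
Qed.

Lemma continuous_plusR (f g : R -> R) x :
  continuous f x -> continuous g x -> continuous (fun y => f y + g y) x.
Proof. apply (continuous_plus f g). Qed.

Lemma continuous_minusR (f g : R -> R) x :
  continuous f x -> continuous g x -> continuous (fun y => f y - g y) x.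
Proof. apply (continuous_minus f g). Qed.

Lemma continuous_mulR (f g : R -> R) x :
  continuous f x -> continuous g x -> continuous (fun y => f y * g y) x.
Proof. apply (continuous_mult f g). Qed.

Lemma continuous_oppR (f : R -> R) x : continuous f x -> continuous (fun y => - f y) x.
Proof. apply (continuous_opp f). Qed.

(* Matching is syntactic on purpose: unifying (fun y => ?f y + ?g y) with an arbitrary real
   expression can unfold the real-number operations and fail to terminate. *)
Ltac solve_continuous :=
  repeat match goal with
  | |- continuous (fun _ => ?c) _ => apply continuous_const
  | |- continuous (fun y => y) _ => apply continuous_id
  | |- continuous (fun y => @?f y + @?g y) _ => apply (continuous_plusR f g)
  | |- continuous (fun y => @?f y - @?g y) _ => apply (continuous_minusR f g)
  | |- continuous (fun y => @?f y * @?g y) _ => apply (continuous_mulR f g)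
  | |- continuous (fun y => - @?f y) _ => apply (continuous_oppR f)
  | |- continuous (fun y => @?f y ^ 2) _ => apply (continuous_sqr f)
  | |- continuous (fun y => @?f y / ?c) _ => apply (continuous_mulR f (fun _ => / c))
  | |- continuous (fun y => ?f (y + ?c)) _ => apply (continuous_comp (fun y => y + c) f)
  | |- _ => solve [auto]
  end.

Lemma is_derive_continuousR (f : R -> R) x l : is_derive f x l -> continuous f x.
Proof. intros H. apply (ex_derive_continuous (V := R_NormedModule)). now exists l. Qed.

Lemma is_derive_constR (c x : R) : is_derive (fun _ => c) x 0.
Proof. apply (is_derive_const (V := R_NormedModule)). Qed.

Lemma is_derive_mulR (f g : R -> R) x a b : is_derive f x a -> is_derive g x b ->
  is_derive (fun y => f y * g y) x (a * g x + f x * b).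
Proof. intros Hf Hg. apply (is_derive_mult f g x a b Hf Hg). intros; apply Rmult_comm. Qed.

Lemma is_derive_sqr (g : R -> R) x l : is_derive g x l ->
  is_derive (fun y => g y ^ 2) x (2 * l * g x).
Proof.
  intros H. apply (is_derive_ext (V := R_NormedModule)) with (fun y => g y * g y);
    [intros; simpl; ring|].
  replace (2 * l * g x) with (l * g x + g x * l) by ring. now apply is_derive_mulR.
Qed.

Lemma is_derive_shift (g : R -> R) c x l :
  is_derive g (x + c) l -> is_derive (fun v => g (v + c)) x l.
Proof.
  intros H. replace l with (scal 1 l) by (unfold scal; simpl; unfold mult; simpl; ring).
  apply (is_derive_comp g (fun v => v + c)); [exact H|].
  auto_derive; [exact I | ring].
Qed.

Lemma is_derive_unique_of_eq (f : R -> R) x l1 l2 :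
  is_derive f x l1 -> is_derive f x l2 -> l1 = l2.
Proof. intros H1 H2. now rewrite <- (is_derive_unique f x l1 H1), (is_derive_unique f x l2 H2). Qed.

Lemma is_derive_locally_const (F : R -> R) t c l :
  locally t (fun u => F u = c) -> is_derive F t l -> l = 0.
Proof.
  intros Hc HD. apply (is_derive_unique_of_eq F t); [exact HD|].
  apply (is_derive_ext_loc (fun _ => c)); [|apply is_derive_constR].
  apply filter_imp with (2 := Hc). intros; now symmetry.
Qed.

Lemma locally_pos t : 0 < t -> locally t (fun u => 0 < u).
Proof.
  intros Ht. exists (mkposreal t Ht). intros u Hu. change (Rabs (u - t) < t) in Hu.
  apply Rabs_def2 in Hu. lra.
Qed.

Lemma nondecreasing_of_derive_nonneg (F dF : R -> R) :
  (forall x, 0 <= x -> is_derive F x (dF x)) -> (forall x, 0 < x -> 0 <= dF x) ->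
  forall t1 t2, 0 <= t1 -> t1 <= t2 -> F t1 <= F t2.
Proof.
  intros HD Hpos t1 t2 H1 H12. destruct (Req_dec t1 t2) as [<-|Hne]; [lra|].
  destruct (MVT_cor2 F dF t1 t2) as [c [Hc Hct]]; [lra | intros; apply is_derive_Reals, HD; lra|].
  assert (0 <= dF c) by (apply Hpos; lra). nra.
Qed.

Lemma ex_RInt_continuousR (f : R -> R) a b : (forall x, continuous f x) -> ex_RInt f a b.
Proof. intros H. apply (ex_RInt_continuous (V := R_CompleteNormedModule)). intros; apply H. Qed.

Lemma ex_RInt_continuous_interval (f : R -> R) a b :
  a <= b -> (forall x, a <= x <= b -> continuous f x) -> ex_RInt f a b.
Proof.
  intros Hab H. apply (ex_RInt_continuous (V := R_CompleteNormedModule)). intros z Hz.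
  rewrite Rmin_left, Rmax_right in Hz by lra. now apply H.
Qed.

Lemma RInt_extR (f g : R -> R) a b :
  (forall x, Rmin a b < x < Rmax a b -> f x = g x) -> RInt f a b = RInt g a b.
Proof. apply (RInt_ext (V := R_CompleteNormedModule)). Qed.

Lemma RInt_plusR (f g : R -> R) a b : ex_RInt f a b -> ex_RInt g a b ->
  RInt (fun x => f x + g x) a b = RInt f a b + RInt g a b.
Proof. apply (RInt_plus (V := R_CompleteNormedModule)). Qed.

Lemma RInt_minusR (f g : R -> R) a b : ex_RInt f a b -> ex_RInt g a b ->
  RInt (fun x => f x - g x) a b = RInt f a b - RInt g a b.
Proof. apply (RInt_minus (V := R_CompleteNormedModule)). Qed.

Lemma RInt_scalR (f : R -> R) a b l : ex_RInt f a b ->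
  RInt (fun x => l * f x) a b = l * RInt f a b.
Proof. apply (RInt_scal (V := R_CompleteNormedModule)). Qed.

Lemma RInt_constR (c a b : R) : RInt (fun _ => c) a b = (b - a) * c.
Proof. apply (RInt_const (V := R_CompleteNormedModule)). Qed.

Lemma RInt_ChaslesR (f : R -> R) a b c : ex_RInt f a b -> ex_RInt f b c ->
  RInt f a b + RInt f b c = RInt f a c.
Proof. apply (RInt_Chasles (V := R_CompleteNormedModule)). Qed.

Lemma RInt_shift (f : R -> R) a b c : (forall x, continuous f x) ->
  RInt (fun y => f (y + c)) a b = RInt f (a + c) (b + c).
Proof.
  intros H. replace (a + c) with (1 * a + c) by ring. replace (b + c) with (1 * b + c) by ring.
  rewrite <- (RInt_comp_lin (V := R_CompleteNormedModule) f 1 c a b).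
  - apply RInt_extR. intros x _.
    change (f (x + c) = 1 * f (1 * x + c)). now rewrite !Rmult_1_l.
  - now apply ex_RInt_continuousR.
Qed.

Lemma RInt_is_derive (f df : R -> R) a b :
  (forall x, Rmin a b <= x <= Rmax a b -> is_derive f x (df x)) ->
  (forall x, Rmin a b <= x <= Rmax a b -> continuous df x) ->
  RInt df a b = f b - f a.
Proof. intros H1 H2. apply is_RInt_unique, (is_RInt_derive f df a b H1 H2). Qed.

Lemma RInt_derive_periodic (f df : R -> R) :
  (forall x, is_derive f x (df x)) -> (forall x, continuous df x) ->
  f 1 = f 0 -> RInt df 0 1 = 0.
Proof. intros H1 H2 H3. rewrite (RInt_is_derive f df); [lra | auto | auto]. Qed.

Lemma sumd_ext d (g h : nat -> R) :
  (forall i, (i < d)%nat -> g i = h i) -> sumd d g = sumd d h.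
Proof.
  destruct d as [|k]; simpl; [reflexivity|]. intros H.
  induction k as [|k IH]; simpl; [apply H; lia|].
  rewrite IH, H; [reflexivity | lia | intros; apply H; lia].
Qed.

Lemma sumd_plus d (g h : nat -> R) : sumd d (fun i => g i + h i) = sumd d g + sumd d h.
Proof. destruct d as [|k]; simpl; [lra|]. induction k; simpl; lra. Qed.

Lemma sumd_minus d (g h : nat -> R) : sumd d (fun i => g i - h i) = sumd d g - sumd d h.
Proof. destruct d as [|k]; simpl; [lra|]. induction k; simpl; lra. Qed.

Lemma sumd_scal d l (g : nat -> R) : sumd d (fun i => l * g i) = l * sumd d g.
Proof. destruct d as [|k]; simpl; [lra|]. induction k; simpl; lra. Qed.

Lemma sumd_ge0 d (g : nat -> R) : (forall i, (i < d)%nat -> 0 <= g i) -> 0 <= sumd d g.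
Proof.
  destruct d as [|k]; simpl; intros H; [lra|].
  induction k as [|k IH]; simpl; [apply H; lia|].
  assert (0 <= g (S k)) by (apply H; lia).
  assert (0 <= sum_f_R0 g k) by (apply IH; intros; apply H; lia). lra.
Qed.

Lemma sumd_le d (g h : nat -> R) : (forall i, (i < d)%nat -> g i <= h i) -> sumd d g <= sumd d h.
Proof.
  intros H. assert (0 <= sumd d (fun i => h i - g i))
    by (apply sumd_ge0; intros i Hi; specialize (H i Hi); lra).
  rewrite sumd_minus in *. lra.
Qed.

Lemma is_derive_sumd d (g g' : nat -> R -> R) x :
  (forall i, (i < d)%nat -> is_derive (g i) x (g' i x)) ->
  is_derive (fun y => sumd d (fun i => g i y)) x (sumd d (fun i => g' i x)).
Proof.
  destruct d as [|k]; simpl; intros H; [apply is_derive_constR|].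
  induction k as [|k IH]; simpl; [apply H; lia|].
  apply (is_derive_plus (fun y => sum_f_R0 (fun i => g i y) k) (g (S k))).
  - apply IH; intros; apply H; lia.
  - apply H; lia.
Qed.

Lemma continuity_2d_pt_sumd d (F : nat -> R -> R -> R) t s :
  (forall i, (i < d)%nat -> continuity_2d_pt (F i) t s) ->
  continuity_2d_pt (fun u v => sumd d (fun i => F i u v)) t s.
Proof.
  destruct d as [|k]; simpl; intros H; [apply continuity_2d_pt_const|].
  induction k as [|k IH]; simpl; [apply H; lia|].
  apply (continuity_2d_pt_plus (fun u v => sum_f_R0 (fun i => F i u v) k) (F (S k))).
  - apply IH; intros; apply H; lia.
  - apply H; lia.
Qed.

Lemma ex_RInt_sumd d (g : nat -> R -> R) a b :
  (forall i, (i < d)%nat -> ex_RInt (g i) a b) ->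
  ex_RInt (fun x => sumd d (fun i => g i x)) a b.
Proof.
  destruct d as [|k]; simpl; intros H.
  - apply (ex_RInt_const (V := R_CompleteNormedModule)).
  - induction k as [|k IH]; simpl; [apply H; lia|].
    apply (ex_RInt_plus (V := R_CompleteNormedModule) (fun x => sum_f_R0 (fun i => g i x) k)).
    + apply IH; intros; apply H; lia.
    + apply H; lia.
Qed.

Lemma RInt_sumd d (g : nat -> R -> R) a b :
  (forall i, (i < d)%nat -> ex_RInt (g i) a b) ->
  RInt (fun x => sumd d (fun i => g i x)) a b = sumd d (fun i => RInt (g i) a b).
Proof.
  intros H. destruct d as [|k]; simpl.
  - rewrite RInt_constR. ring.
  - induction k as [|k IH]; simpl; [reflexivity|].
    rewrite RInt_plusR, IH; [reflexivity | intros; apply H; lia | | apply H; lia].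
    apply (ex_RInt_sumd (S k)). intros; apply H; lia.
Qed.

Lemma continuity_2d_pt_sqr (F : R -> R -> R) t s :
  continuity_2d_pt F t s -> continuity_2d_pt (fun u v => F u v ^ 2) t s.
Proof.
  intros H. apply continuity_2d_pt_ext with (fun u v => F u v * F u v); [intros; ring|].
  now apply continuity_2d_pt_mult.
Qed.

Lemma continuity_2d_pt_fst (F : R -> R -> R) t s :
  continuity_2d_pt F t s -> continuous (fun u => F u s) t.
Proof.
  intros H. apply continuity_pt_filterlim. intros eps Heps.
  destruct (H (mkposreal eps Heps)) as [dl Hd]. exists dl. split; [apply cond_pos|].
  intros x [_ Hx]. apply Hd; [exact Hx|]. simpl. rewrite Rminus_eq_0, Rabs_R0. apply cond_pos.
Qed.

Lemma continuity_2d_pt_snd (F : R -> R -> R) t s :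
  continuity_2d_pt F t s -> continuous (fun v => F t v) s.
Proof.
  intros H. apply continuity_pt_filterlim. intros eps Heps.
  destruct (H (mkposreal eps Heps)) as [dl Hd]. exists dl. split; [apply cond_pos|].
  intros x [_ Hx]. apply Hd; [|exact Hx]. simpl. rewrite Rminus_eq_0, Rabs_R0. apply cond_pos.
Qed.

Lemma continuity_2d_pt_swap (F : R -> R -> R) t s :
  continuity_2d_pt F t s -> continuity_2d_pt (fun u v => F v u) s t.
Proof. intros H eps. destruct (H eps) as [dl Hd]. exists dl. intros u v Hu Hv. now apply Hd. Qed.

Lemma ex_RInt_continuity_2d (F : R -> R -> R) t a b :
  (forall v, continuity_2d_pt F t v) -> ex_RInt (F t) a b.
Proof. intros H. apply ex_RInt_continuousR. intros v. apply continuity_2d_pt_snd, H. Qed.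

Lemma is_derive_RInt_param_2d (F dF : R -> R -> R) t a b :
  (forall u v, is_derive (fun z => F z v) u (dF u v)) ->
  (forall u v, continuity_2d_pt F u v) -> (forall u v, continuity_2d_pt dF u v) ->
  is_derive (fun u => RInt (F u) a b) t (RInt (dF t) a b).
Proof.
  intros HD HF HdF.
  replace (RInt (dF t) a b) with (RInt (fun v => Derive (fun u => F u v) t) a b)
    by (apply RInt_extR; intros; apply is_derive_unique, HD).
  apply (is_derive_RInt_param F a b t).
  - apply filter_forall. intros y v _. eexists. apply HD.
  - intros v _. apply continuity_2d_pt_ext with dF;
      [intros; symmetry; apply is_derive_unique, HD | apply HdF].
  - apply filter_forall. intros y. now apply ex_RInt_continuity_2d.
Qed.

Lemma is_derive_d_s_in_t (h : R -> R -> R) :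
  (forall t s, ex_derive (fun u => h u s) t) ->
  (forall t s, ex_derive (fun v => h t v) s) ->
  (forall t s, continuity_2d_pt (d_t h) t s) ->
  (forall t s, ex_derive (fun v => d_t h t v) s) ->
  (forall t s, continuity_2d_pt (d_s (d_t h)) t s) ->
  forall t0 s, is_derive (fun u => d_s h u s) t0 (d_s (d_t h) t0 s).
Proof.
  intros Ht Hs Hc Hts Hc2 t0 s.
  (* h(t, v) = h(t0, v) + int_t0^t d_t h(tau, v) dtau; differentiate under the integral in v. *)
  assert (Hint : forall t v, h t v = h t0 v + RInt (fun tau => d_t h tau v) t0 t).
  { intros t v. rewrite (RInt_is_derive (fun tau => h tau v) (fun tau => d_t h tau v)); [ring| |].
    - intros x _. apply Derive_correct, Ht.
    - intros x _. apply (continuity_2d_pt_fst (d_t h)), Hc. }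
  assert (Hds : forall t, d_s h t s = d_s h t0 s + RInt (fun tau => d_s (d_t h) tau s) t0 t).
  { intros t. unfold d_s at 1.
    rewrite (Derive_ext (fun v => h t v) (fun v => h t0 v + RInt (fun tau => d_t h tau v) t0 t) s (Hint t)).
    apply is_derive_unique,
      (is_derive_plus (fun v => h t0 v) (fun v => RInt (fun tau => d_t h tau v) t0 t)).
    - apply Derive_correct, Hs.
    - apply (is_derive_RInt_param (fun u tau => d_t h tau u) t0 t s).
      + apply filter_forall. intros y tau _. apply Hts.
      + intros tau _. apply (continuity_2d_pt_swap (d_s (d_t h)) tau s), Hc2.
      + apply filter_forall. intros y. apply ex_RInt_continuousR. intros x.
        apply (continuity_2d_pt_fst (d_t h)), Hc. }
  apply (is_derive_ext (V := R_NormedModule)) with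
    (fun t => d_s h t0 s + RInt (fun tau => d_s (d_t h) tau s) t0 t); [intros t; symmetry; apply Hds|].
  replace (d_s (d_t h) t0 s) with (0 + d_s (d_t h) t0 s) by ring.
  apply (is_derive_plus (fun _ => d_s h t0 s)); [apply is_derive_constR|].
  apply (is_derive_RInt (fun tau => d_s (d_t h) tau s)
    (fun t => RInt (fun tau => d_s (d_t h) tau s) t0 t) t0 t0).
  - apply filter_forall. intros b. apply (RInt_correct (V := R_CompleteNormedModule)).
    apply ex_RInt_continuousR. intros x. apply (continuity_2d_pt_fst (d_s (d_t h)) x s), Hc2.
  - apply (continuity_2d_pt_fst (d_s (d_t h)) t0 s), Hc2.
Qed.

Section Smooth.

Variable f : R -> R -> R.
Hypothesis f_smooth : smooth2 f.

Lemma ex_derive_Dts_s m n t s : ex_derive (fun v => Dts m n f t v) s.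
Proof. exact (proj1 (f_smooth m n) t s). Qed.

Lemma ex_derive_Dts_t m n t s : ex_derive (fun u => Dts m n f u s) t.
Proof. exact (proj1 (proj2 (f_smooth m n)) t s). Qed.

Lemma continuity_2d_pt_Dts m n t s : continuity_2d_pt (Dts m n f) t s.
Proof. apply continuity_2d_pt_filterlim, (proj2 (proj2 (f_smooth m n))). Qed.

Lemma is_derive_Dts_s m n t s : is_derive (fun v => Dts m n f t v) s (Dts m (S n) f t s).
Proof. apply Derive_correct, ex_derive_Dts_s. Qed.

Lemma d_t_Dts m n t s : d_t (Dts m n f) t s = Dts (S m) n f t s.
Proof.
  revert t s. induction n as [|n IH]; intros t s; [reflexivity|].
  change (Dts m (S n) f) with (d_s (Dts m n f)).
  transitivity (d_s (d_t (Dts m n f)) t s).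
  - apply is_derive_unique, (is_derive_d_s_in_t (Dts m n f)).
    + apply ex_derive_Dts_t.
    + apply ex_derive_Dts_s.
    + intros u v. apply continuity_2d_pt_ext with (Dts (S m) n f);
        [intros; symmetry; apply IH | apply continuity_2d_pt_Dts].
    + intros u v. apply ex_derive_ext with (fun w => Dts (S m) n f u w);
        [intros; symmetry; apply IH | apply ex_derive_Dts_s].
    + intros u v. apply continuity_2d_pt_ext with (Dts (S m) (S n) f);
        [intros; unfold d_s; apply Derive_ext; intros; symmetry; apply IH | apply continuity_2d_pt_Dts].
  - unfold d_s. apply Derive_ext. intros; apply IH.
Qed.

Lemma is_derive_Dts_t m n t s : is_derive (fun u => Dts m n f u s) t (Dts (S m) n f t s).
Proof. rewrite <- d_t_Dts. apply Derive_correct, ex_derive_Dts_t. Qed.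

Hypothesis f_periodic : forall t s, f t (s + 1) = f t s.

Lemma Dts_periodic m n t s : Dts m n f t (s + 1) = Dts m n f t s.
Proof.
  revert t s. induction n as [|n IH]; intros t s.
  - revert t. induction m as [|m IHm]; intros t; [apply f_periodic|].
    apply Derive_ext. intros; apply IHm.
  - symmetry. apply is_derive_unique.
    apply (is_derive_ext (V := R_NormedModule)) with (fun v => Dts m n f t (v + 1));
      [intros; apply IH|].
    apply (is_derive_shift (fun v => Dts m n f t v)), is_derive_Dts_s.
Qed.

Lemma Dts_at_1 m n t : Dts m n f t 1 = Dts m n f t 0.
Proof. rewrite <- (Dts_periodic m n t 0), Rplus_0_l. reflexivity. Qed.

End Smooth.

(** * Wirtinger's inequality *)

Lemma dirichlet_weighted (g g' : R -> R) a L dl : 0 < L -> 0 < dl ->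
  (forall x, is_derive g x (g' x)) -> (forall x, continuous g' x) ->
  g a = 0 -> g (a + L) = 0 ->
  (PI / (L + 2 * dl)) ^ 2 * RInt (fun x => g x ^ 2) a (a + L) <=
  RInt (fun x => g' x ^ 2) a (a + L).
Proof.
  intros HL Hdl Hg Hg' Ha Hb. pose proof PI_RGT_0 as Hpi.
  set (w := PI / (L + 2 * dl)).
  set (th := fun x => w * (x - a + dl)).
  assert (Hsin : forall x, a <= x <= a + L -> 0 < sin (th x)).
  { intros x Hx. unfold th, w. apply sin_gt_0.
    - apply Rmult_lt_0_compat; [apply Rdiv_lt_0_compat|]; lra.
    - replace (PI / (L + 2 * dl) * (x - a + dl)) with (PI - PI * (a + L + dl - x) / (L + 2 * dl))
        by (field; lra).
      assert (0 < PI * (a + L + dl - x) / (L + 2 * dl))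
        by (apply Rdiv_lt_0_compat; [apply Rmult_lt_0_compat|]; lra).
      lra. }
  (* phi = w cot(th) solves phi' = -(w^2 + phi^2), so (g' - phi g)^2 = g'^2 - w^2 g^2 - (phi g^2)';
     the margin dl keeps phi finite on [a, a + L]. *)
  set (phi := fun x => w * cos (th x) / sin (th x)).
  assert (Dphi : forall x, a <= x <= a + L -> is_derive phi x (- (w ^ 2 + phi x ^ 2))).
  { intros x Hx. specialize (Hsin x Hx). unfold phi, th in *.
    auto_derive; replace (x + - a + dl) with (x - a + dl) by ring; [lra | field; lra]. }
  clearbody phi th.
  set (dPhi := fun x => - (w ^ 2 + phi x ^ 2) * g x ^ 2 + phi x * (2 * g' x * g x)).
  assert (Cg : forall x, continuous g x) by (intros x; apply (is_derive_continuousR g x (g' x)), Hg).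
  assert (Cphi : forall x, a <= x <= a + L -> continuous phi x)
    by (intros x Hx; apply (is_derive_continuousR phi x (- (w ^ 2 + phi x ^ 2))), Dphi, Hx).
  assert (Cd : forall x, a <= x <= a + L -> continuous dPhi x).
  { intros x Hx. specialize (Cphi x Hx). unfold dPhi. solve_continuous. }
  assert (I0 : RInt dPhi a (a + L) = 0 :> R).
  { rewrite (RInt_is_derive (fun x => phi x * g x ^ 2) dPhi).
    - rewrite Ha, Hb. ring.
    - intros x Hx. rewrite Rmin_left, Rmax_right in Hx by lra.
      apply (is_derive_mulR phi (fun y => g y ^ 2)); [apply Dphi, Hx | apply is_derive_sqr, Hg].
    - intros x Hx. rewrite Rmin_left, Rmax_right in Hx by lra. now apply Cd. }
  assert (E1 : ex_RInt (fun x => g x ^ 2) a (a + L))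
    by (apply ex_RInt_continuous_interval; [lra|]; intros; solve_continuous).
  assert (E2 : ex_RInt (fun x => g' x ^ 2) a (a + L))
    by (apply ex_RInt_continuous_interval; [lra|]; intros; solve_continuous).
  assert (E3 : ex_RInt dPhi a (a + L)) by (apply ex_RInt_continuous_interval; [lra | exact Cd]).
  assert (P : 0 <= RInt (fun x => (g' x - phi x * g x) ^ 2) a (a + L)).
  { apply RInt_ge_0; [lra| |intros; apply pow2_ge_0].
    apply ex_RInt_continuous_interval; [lra|]. intros x Hx. specialize (Cphi x Hx). solve_continuous. }
  rewrite (RInt_extR _ (fun x => (g' x ^ 2 - w ^ 2 * g x ^ 2) - dPhi x))
    in P by (intros; unfold dPhi; ring).
  assert (E4 : ex_RInt (fun x => w ^ 2 * g x ^ 2) a (a + L))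
    by apply (ex_RInt_scal (V := R_CompleteNormedModule) (fun x => g x ^ 2)), E1.
  assert (E5 : ex_RInt (fun x => g' x ^ 2 - w ^ 2 * g x ^ 2) a (a + L))
    by (apply (ex_RInt_minus (V := R_CompleteNormedModule)); [exact E2 | exact E4]).
  rewrite (RInt_minusR _ _ _ _ E5 E3), (RInt_minusR _ _ _ _ E2 E4), (RInt_scalR _ _ _ _ E1), I0 in P.
  lra.
Qed.

Lemma le_sqr_mul_of_shrinking (x L B : R) : 0 <= L -> 0 <= B ->
  (forall dl, 0 < dl -> x <= (L + 2 * dl) ^ 2 * B) -> x <= L ^ 2 * B.
Proof.
  intros HL HB H. apply Rle_plus_epsilon. intros eps Heps.
  set (K := (4 * L + 4) * B + 1).
  assert (HK : 0 < K) by (unfold K; nra).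
  set (dl := Rmin 1 (eps / K)).
  assert (Hdl : 0 < dl) by (apply Rmin_glb_lt; [lra | apply Rdiv_lt_0_compat; lra]).
  assert (Hdl1 : dl <= 1) by apply Rmin_l.
  assert (HdlK : dl * K <= eps).
  { assert (dl <= eps / K) by apply Rmin_r.
    replace eps with (eps / K * K) by (field; lra). nra. }
  specialize (H dl Hdl). unfold K in HdlK. nra.
Qed.

Lemma dirichlet_poincare (g g' : R -> R) a L : 0 < L ->
  (forall x, is_derive g x (g' x)) -> (forall x, continuous g' x) ->
  g a = 0 -> g (a + L) = 0 ->
  PI ^ 2 * RInt (fun x => g x ^ 2) a (a + L) <= L ^ 2 * RInt (fun x => g' x ^ 2) a (a + L).
Proof.
  intros HL Hg Hg' Ha Hb.
  assert (Cg : forall x, continuous g x) by (intros x; apply (is_derive_continuousR g x (g' x)), Hg).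
  apply le_sqr_mul_of_shrinking; [lra | |].
  - apply RInt_ge_0; [lra | | intros; apply pow2_ge_0].
    apply ex_RInt_continuousR. intros; solve_continuous.
  - intros dl Hdl. pose proof (dirichlet_weighted g g' a L dl HL Hdl Hg Hg' Ha Hb) as H.
    replace (PI ^ 2 * RInt (fun x => g x ^ 2) a (a + L))
      with ((L + 2 * dl) ^ 2 * ((PI / (L + 2 * dl)) ^ 2 * RInt (fun x => g x ^ 2) a (a + L)))
      by (field; lra).
    apply Rmult_le_compat_l; [apply pow2_ge_0 | exact H].
Qed.

Lemma RInt_split_half (f : R -> R) : (forall x, continuous f x) ->
  RInt f 0 1 = RInt (fun y => f y + f (y + 1/2)) 0 (1/2).
Proof.
  intros H. assert (Hf : forall a b, ex_RInt f a b) by (intros; now apply ex_RInt_continuousR).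
  rewrite RInt_plusR, RInt_shift; [| exact H | apply Hf | ].
  - replace (0 + 1/2) with (1/2) by ring. replace (1/2 + 1/2) with 1 by field.
    symmetry. apply RInt_ChaslesR; apply Hf.
  - apply ex_RInt_continuousR. intros; apply (continuous_comp (fun y => y + 1/2) f); [|apply H].
    solve_continuous.
Qed.

Lemma RInt_shift_half_periodic (p : R -> R) a : (forall x, continuous p x) ->
  (forall x, p (x + 1/2) = p x) -> 0 <= a <= 1/2 -> RInt p a (a + 1/2) = RInt p 0 (1/2) :> R.
Proof.
  intros Hc Hp Ha. assert (Hi : forall b c, ex_RInt p b c) by (intros; now apply ex_RInt_continuousR).
  rewrite <- (RInt_ChaslesR p a (1/2) (a + 1/2)), <- (RInt_ChaslesR p 0 a (1/2)); try apply Hi.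
  replace (RInt p (1/2) (a + 1/2)) with (RInt p 0 a); [ring|].
  replace (1/2) with (0 + 1/2) at 1 by ring. rewrite <- RInt_shift by exact Hc.
  apply RInt_extR. intros; symmetry; apply Hp.
Qed.

Lemma wirtinger_half (p p' : R -> R) a :
  (forall x, is_derive p x (p' x)) -> (forall x, continuous p' x) ->
  (forall x, p (x + 1/2) ^ 2 = p x ^ 2) -> (forall x, p' (x + 1/2) ^ 2 = p' x ^ 2) ->
  0 <= a <= 1/2 -> p a = 0 -> p (a + 1/2) = 0 ->
  4 * PI ^ 2 * RInt (fun x => p x ^ 2) 0 (1/2) <= RInt (fun x => p' x ^ 2) 0 (1/2).
Proof.
  intros Hd Hc Hp Hp' Ha Z1 Z2.
  assert (Cp : forall x, continuous p x) by (intros x; apply (is_derive_continuousR p x (p' x)), Hd).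
  pose proof (dirichlet_poincare p p' a (1/2) ltac:(lra) Hd Hc Z1 Z2) as H.
  rewrite !(RInt_shift_half_periodic (fun x => _ ^ 2)) in H by (auto; intros; solve_continuous).
  lra.
Qed.

Lemma RInt_eq0_root (k : R -> R) a b : a < b -> (forall x, continuous k x) ->
  RInt k a b = 0 -> exists c, a <= c <= b /\ k c = 0.
Proof.
  intros Hab Hc HI. set (K := fun x => RInt k a x).
  assert (DK : forall x, is_derive K x (k x)).
  { intros x. apply (is_derive_RInt k K a x); [|apply Hc]. apply filter_forall. intros y.
    apply (RInt_correct (V := R_CompleteNormedModule)), ex_RInt_continuousR, Hc. }
  assert (Ka : K a = 0) by apply (RInt_point (V := R_CompleteNormedModule)).
  destruct (MVT_gen K a b k) as [c [Hcab Heq]].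
  - intros; apply DK.
  - intros x _. apply continuity_pt_filterlim, (is_derive_continuousR K x (k x)), DK.
  - rewrite Rmin_left, Rmax_right in Hcab by lra. exists c. split; [exact Hcab|].
    unfold K in Heq, Ka. rewrite HI, Ka in Heq.
    destruct (Rmult_integral (k c) (b - a)); [lra | assumption | lra].
Qed.

Definition half_comb (c : R) (f : R -> R) (x : R) : R := (f x + c * f (x + 1/2)) / 2.

Lemma is_derive_half_comb c (f f' : R -> R) x : (forall y, is_derive f y (f' y)) ->
  is_derive (half_comb c f) x (half_comb c f' x).
Proof.
  intros Hd. unfold half_comb.
  replace ((f' x + c * f' (x + 1/2)) / 2)
    with ((f' x + (0 * f (x + 1/2) + c * f' (x + 1/2))) * / 2 + (f x + c * f (x + 1/2)) * 0)
    by field.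
  apply (is_derive_mulR (fun y => f y + c * f (y + 1/2)) (fun _ => / 2)); [|apply is_derive_constR].
  apply (is_derive_plus f (fun y => c * f (y + 1/2))); [apply Hd|].
  apply (is_derive_mulR (fun _ => c) (fun y => f (y + 1/2))); [apply is_derive_constR|].
  apply is_derive_shift, Hd.
Qed.

Lemma continuous_half_comb c (f : R -> R) x : (forall y, continuous f y) ->
  continuous (half_comb c f) x.
Proof. intros H. unfold half_comb. solve_continuous. Qed.

Lemma half_comb_shift c (f : R -> R) x : c * c = 1 -> (forall y, f (y + 1) = f y) ->
  half_comb c f (x + 1/2) = c * half_comb c f x.
Proof.
  intros Hc Hp. unfold half_comb.
  replace (x + 1/2 + 1/2) with (x + 1) by field. rewrite Hp.
  replace (c * ((f x + c * f (x + 1/2)) / 2)) with ((c * f x + (c * c) * f (x + 1/2)) / 2) by field.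
  rewrite Hc. field.
Qed.

Lemma sqr_half_comb (f : R -> R) x :
  f x ^ 2 + f (x + 1/2) ^ 2 = 2 * half_comb 1 f x ^ 2 + 2 * half_comb (-1) f x ^ 2.
Proof. unfold half_comb. field. Qed.

Lemma RInt_sqr_half_comb (g : R -> R) : (forall x, continuous g x) ->
  RInt (fun x => g x ^ 2) 0 1 =
  2 * RInt (fun x => half_comb 1 g x ^ 2) 0 (1/2) + 2 * RInt (fun x => half_comb (-1) g x ^ 2) 0 (1/2).
Proof.
  intros Cg. rewrite RInt_split_half by (intros; solve_continuous).
  rewrite (RInt_extR _ (fun x => 2 * half_comb 1 g x ^ 2 + 2 * half_comb (-1) g x ^ 2))
    by (intros; apply sqr_half_comb).
  rewrite RInt_plusR, !RInt_scalR; [reflexivity | ..];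
    apply ex_RInt_continuousR; intros; solve_continuous; now apply continuous_half_comb.
Qed.

Lemma wirtinger_half_comb c (f f' : R -> R) a : c * c = 1 ->
  (forall x, is_derive f x (f' x)) -> (forall x, continuous f' x) ->
  (forall x, f (x + 1) = f x) -> (forall x, f' (x + 1) = f' x) ->
  0 <= a <= 1/2 -> half_comb c f a = 0 ->
  4 * PI ^ 2 * RInt (fun x => half_comb c f x ^ 2) 0 (1/2) <=
  RInt (fun x => half_comb c f' x ^ 2) 0 (1/2).
Proof.
  intros Hc1 Hd Hc Hp Hp' Ha Za.
  assert (Hsqr : forall g : R -> R, (forall y, g (y + 1) = g y) ->
    forall x, half_comb c g (x + 1/2) ^ 2 = half_comb c g x ^ 2).
  { intros g Hg x. rewrite half_comb_shift by auto.
    transitivity ((c * c) * half_comb c g x ^ 2); [ring | rewrite Hc1; ring]. }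
  apply (wirtinger_half _ _ a); auto.
  - intros; now apply is_derive_half_comb.
  - intros; now apply continuous_half_comb.
  - rewrite half_comb_shift, Za by auto. ring.
Qed.

(* half_comb (-1) f changes sign on [0, 1/2] and half_comb 1 f has mean zero there, so both
   vanish at some a in [0, 1/2], hence also at a + 1/2, and the Dirichlet-Poincare inequality on
   an interval of length 1/2 applies to each. *)
Lemma wirtinger (f f' : R -> R) :
  (forall x, is_derive f x (f' x)) -> (forall x, continuous f' x) ->
  (forall x, f (x + 1) = f x) -> RInt f 0 1 = 0 ->
  4 * PI ^ 2 * RInt (fun x => f x ^ 2) 0 1 <= RInt (fun x => f' x ^ 2) 0 1.
Proof.
  intros Hd Hc Hp Hm.
  assert (Cf : forall x, continuous f x) by (intros x; apply (is_derive_continuousR f x (f' x)), Hd).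
  assert (Hp' : forall x, f' (x + 1) = f' x).
  { intros x. apply (is_derive_unique_of_eq f x); [|apply Hd].
    apply (is_derive_ext (V := R_NormedModule)) with (fun v => f (v + 1)); [intros; apply Hp|].
    apply is_derive_shift, Hd. }
  assert (Codd : continuity (half_comb (-1) f))
    by (intros x; apply continuity_pt_filterlim, continuous_half_comb, Cf).
  destruct (IVT_cor (half_comb (-1) f) 0 (1/2) Codd ltac:(lra)) as [a [Ha Za]].
  { replace (1/2) with (0 + 1/2) by ring. rewrite half_comb_shift by (auto; ring). nra. }
  assert (Heven : RInt (half_comb 1 f) 0 (1/2) = 0).
  { rewrite (RInt_extR _ (fun y => / 2 * (f y + f (y + 1/2)))) by (intros; unfold half_comb; field).
    rewrite RInt_scalR, <- RInt_split_half, Hm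
      by (auto; apply ex_RInt_continuousR; intros; solve_continuous).
    apply Rmult_0_r. }
  destruct (RInt_eq0_root (half_comb 1 f) 0 (1/2) ltac:(lra)
    (fun x => continuous_half_comb 1 f x Cf) Heven) as [b [Hb Zb]].
  rewrite !RInt_sqr_half_comb by auto.
  pose proof (wirtinger_half_comb 1 f f' b ltac:(ring) Hd Hc Hp Hp' Hb Zb).
  pose proof (wirtinger_half_comb (-1) f f' a ltac:(ring) Hd Hc Hp Hp' Ha Za).
  lra.
Qed.

(** * A minimum principle *)

Lemma local_min_derive2_nonneg (g g1 : R -> R) x0 r l : 0 < r ->
  (forall x, is_derive g x (g1 x)) -> is_derive g1 x0 l ->
  (forall x, Rabs (x - x0) < r -> g x0 <= g x) -> 0 <= l.
Proof.
  intros Hr D1 D2 Hmin. destruct (Rle_lt_dec 0 l) as [|Hl]; [assumption | exfalso].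
  assert (Hg1 : g1 x0 = 0).
  { set (pr := exist (fun l => derivable_pt_abs g x0 l) (g1 x0)
                  (proj1 (is_derive_Reals _ _ _) (D1 x0))).
    apply (deriv_minimum g (x0 - r) (x0 + r) x0 pr); [lra | lra |].
    intros x H1 H2. apply Hmin. apply Rabs_def1; lra. }
  destruct (proj1 (is_derive_Reals g1 x0 l) D2 (- l / 2)) as [dl Hdl]; [lra|].
  set (h := Rmin (dl / 2) (r / 2)).
  assert (Hh : 0 < h <= dl / 2 /\ h <= r / 2).
  { pose proof (cond_pos dl). unfold h.
    repeat split; [apply Rmin_glb_lt; lra | apply Rmin_l | apply Rmin_r]. }
  destruct (MVT_cor2 g g1 x0 (x0 + h)) as [c [Hc Hcx]]; [lra | intros; apply is_derive_Reals, D1|].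
  (* g1 (x0 + u) / u is close to l < 0 for small u > 0, so g decreases just right of x0 *)
  specialize (Hdl (c - x0)). replace (x0 + (c - x0)) with c in Hdl by ring. rewrite Hg1 in Hdl.
  assert (Hneg : (g1 c - 0) / (c - x0) < 0).
  { assert (Habs : Rabs (c - x0) < dl) by (rewrite Rabs_right; lra).
    specialize (Hdl ltac:(lra) Habs). apply Rabs_def2 in Hdl. lra. }
  assert (g1 c < 0).
  { replace (g1 c) with ((g1 c - 0) / (c - x0) * (c - x0)) by (field; lra). nra. }
  assert (g x0 <= g (x0 + h)) by (apply Hmin; rewrite Rabs_right; lra).
  nra.
Qed.

Lemma periodic_min_principle (g g1 g2 k : R -> R) :
  (forall x, is_derive g x (g1 x)) -> (forall x, is_derive g1 x (g2 x)) ->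
  (forall x, g (x + 1) = g x) -> (forall x, 0 <= k x) -> (forall x, g2 x = g x * k x - 1) ->
  forall s, 0 <= s <= 1 -> 0 < g s.
Proof.
  intros D1 D2 Hp Hk He s Hs.
  assert (Cg : forall x, 0 <= x <= 1 -> continuity_pt g x)
    by (intros x _; apply continuity_pt_filterlim, (is_derive_continuousR g x (g1 x)), D1).
  destruct (continuity_ab_min g 0 1 ltac:(lra) Cg) as [mx [Hmin Hmx]].
  assert (Hloc : forall x, Rabs (x - mx) < 1 -> g mx <= g x).
  { intros x Hx. apply Rabs_def2 in Hx.
    destruct (Rlt_le_dec x 0); [rewrite <- (Hp x); apply Hmin; lra|].
    destruct (Rle_lt_dec x 1); [apply Hmin; lra|].
    replace x with ((x - 1) + 1) by ring. rewrite Hp. apply Hmin; lra. }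
  pose proof (local_min_derive2_nonneg g g1 mx 1 (g2 mx) Rlt_0_1 D1 (D2 mx) Hloc) as H2.
  rewrite He in H2. specialize (Hk mx). specialize (Hmin s Hs).
  assert (0 < g mx) by nra. lra.
Qed.

(** * Limits at infinity *)

Lemma is_lim_nondecreasing_bounded (F : R -> R) B :
  (forall t1 t2, 0 <= t1 -> t1 <= t2 -> F t1 <= F t2) -> (forall t, 0 <= t -> F t <= B) ->
  exists L : R, is_lim F p_infty L.
Proof.
  intros Hmono HB.
  destruct (completeness (fun y => exists t, 0 <= t /\ y = F t)) as [L [Hub Hlub]].
  - exists B. intros y [t [Ht ->]]. now apply HB.
  - exists (F 0), 0. split; [lra | reflexivity].
  - exists L. apply is_lim_spec. intros eps.
    assert (HT : exists T, 0 <= T /\ L - eps < F T).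
    { apply Classical_Prop.NNPP. intros Hno.
      assert (L <= L - eps); [|pose proof (cond_pos eps); lra].
      apply Hlub. intros y [t [Ht ->]]. apply Rnot_lt_le. intros Hlt. apply Hno. now exists t. }
    destruct HT as [T [HT HFT]]. exists T. intros x Hx.
    assert (F T <= F x) by (apply Hmono; lra).
    assert (F x <= L) by (apply Hub; exists x; split; [lra | reflexivity]).
    apply Rabs_def1; lra.
Qed.

Lemma is_lim_le_p_infty (F G : R -> R) (lF lG : R) : (forall t, 0 <= t -> F t <= G t) ->
  is_lim F p_infty lF -> is_lim G p_infty lG -> lF <= lG.
Proof.
  intros H HF HG. apply (is_lim_le_loc F G p_infty lF lG); [|exact HF | exact HG].
  exists 0. intros x Hx. apply H. lra.
Qed.

(* If E' = 2 (E - S) and both converge, a gap between the limits would make E grow linearly. *)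
Lemma is_lim_eq_of_derive_gap (E S : R -> R) (LE LS : R) :
  (forall t, 0 <= t -> is_derive E t (2 * (E t - S t))) ->
  is_lim E p_infty LE -> is_lim S p_infty LS -> LS <= LE -> LS = LE.
Proof.
  intros HD HE HS Hle. destruct (Rle_lt_or_eq_dec LS LE Hle) as [Hlt|]; [exfalso | assumption].
  set (e := mkposreal ((LE - LS) / 4) ltac:(lra)).
  apply is_lim_spec in HE, HS. destruct (HE e) as [M1 HM1]. destruct (HS e) as [M2 HM2].
  set (T := Rmax 0 (Rmax M1 M2) + 1).
  assert (HT : 0 <= T /\ M1 < T /\ M2 < T).
  { unfold T. pose proof (Rmax_l 0 (Rmax M1 M2)). pose proof (Rmax_r 0 (Rmax M1 M2)).
    pose proof (Rmax_l M1 M2). pose proof (Rmax_r M1 M2). lra. }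
  destruct (MVT_cor2 E (fun t => 2 * (E t - S t)) T (T + 1)) as [c [Hc Hcx]];
    [lra | intros; apply is_derive_Reals, HD; lra|].
  pose proof (HM1 T ltac:(lra)). pose proof (HM1 (T + 1) ltac:(lra)).
  pose proof (HM1 c ltac:(lra)). pose proof (HM2 c ltac:(lra)).
  repeat match goal with H : Rabs _ < _ |- _ => apply Rabs_def2 in H end.
  simpl in *. lra.
Qed.

(** * The normalized flow *)

Lemma RInt_derive_periodic_2d (F G : R -> R -> R) t :
  (forall v, is_derive (fun w => F t w) v (G t v)) -> (forall v, continuity_2d_pt G t v) ->
  F t 1 = F t 0 -> RInt (fun v => G t v) 0 1 = 0.
Proof.
  intros HD HC HP. apply (RInt_derive_periodic (F t)); [exact HD | | exact HP].
  intros v. apply continuity_2d_pt_snd, HC.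
Qed.

Section NormalizedFlow.

Variables (d : nat) (xi : nat -> R -> R -> R) (sigma : R -> R -> R).
Hypothesis flow : normalized_flow d xi sigma.

Local Notation vel i t s := (Dts 1 0 (xi i) t s - xi i t s).
Local Notation dvel i t s := (Dts 2 0 (xi i) t s - Dts 1 0 (xi i) t s).
Local Notation dvel_s i t s := (Dts 2 1 (xi i) t s - Dts 1 1 (xi i) t s).

Lemma xi_smooth i : (i < d)%nat -> smooth2 (xi i).
Proof. destruct flow as (H & _). exact (H i). Qed.

Lemma sigma_smooth : smooth2 sigma.
Proof. destruct flow as (_ & H & _). exact H. Qed.

Lemma Dts_xi_at_1 i m n t : (i < d)%nat -> Dts m n (xi i) t 1 = Dts m n (xi i) t 0.
Proof.
  intros Hi. destruct flow as (_ & _ & H & _).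
  exact (Dts_at_1 (xi i) (xi_smooth i Hi) (fun t s => H i t s Hi) m n t).
Qed.

Lemma Dts_sigma_at_1 m n t : Dts m n sigma t 1 = Dts m n sigma t 0.
Proof. destruct flow as (_ & _ & _ & H & _). exact (Dts_at_1 sigma sigma_smooth H m n t). Qed.

Lemma xi_periodic i t s : (i < d)%nat -> xi i t (s + 1) = xi i t s.
Proof. destruct flow as (_ & _ & H & _). exact (H i t s). Qed.

Lemma sigma_periodic t s : sigma t (s + 1) = sigma t s.
Proof. destruct flow as (_ & _ & _ & H & _). exact (H t s). Qed.

Lemma tangent_unit t s : 0 <= t -> sumd d (fun i => Dts 0 1 (xi i) t s ^ 2) = 1.
Proof. destruct flow as (_ & _ & _ & _ & H & _). exact (H t s). Qed.

Lemma xi_mean i t : (i < d)%nat -> 0 <= t -> RInt (fun s => xi i t s) 0 1 = 0.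
Proof. destruct flow as (_ & _ & _ & _ & _ & H & _). exact (H i t). Qed.

Lemma velocity_eq i t s : (i < d)%nat -> 0 <= t ->
  vel i t s = Dts 0 1 sigma t s * Dts 0 1 (xi i) t s + sigma t s * Dts 0 2 (xi i) t s.
Proof.
  intros Hi Ht. destruct flow as (_ & _ & _ & _ & _ & _ & H & _).
  change (Dts 1 0 (xi i) t s) with (d_t (xi i) t s). rewrite (H i t s Hi Ht).
  replace (d_s (fun t' s' => sigma t' s' * d_s (xi i) t' s') t s)
    with (Dts 0 1 sigma t s * Dts 0 1 (xi i) t s + sigma t s * Dts 0 2 (xi i) t s); [ring|].
  symmetry. apply is_derive_unique, (is_derive_mulR (fun v => sigma t v) (fun v => d_s (xi i) t v)).
  - exact (is_derive_Dts_s sigma sigma_smooth 0 0 t s).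
  - exact (is_derive_Dts_s (xi i) (xi_smooth i Hi) 0 1 t s).
Qed.

Lemma sigma_ode t s : 0 <= t ->
  Dts 0 2 sigma t s = sigma t s * sumd d (fun i => Dts 0 2 (xi i) t s ^ 2) - 1.
Proof.
  intros Ht. destruct flow as (_ & _ & _ & _ & _ & _ & _ & H).
  specialize (H t s Ht).
  change (d_s (d_s sigma) t s = sigma t s * sumd d (fun i => d_s (d_s (xi i)) t s ^ 2) - 1). lra.
Qed.

Lemma continuity_2d_pt_xi i m n t s : (i < d)%nat -> continuity_2d_pt (Dts m n (xi i)) t s.
Proof. intros Hi. exact (continuity_2d_pt_Dts (xi i) (xi_smooth i Hi) m n t s). Qed.

Lemma continuity_2d_pt_sigma m n t s : continuity_2d_pt (Dts m n sigma) t s.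
Proof. exact (continuity_2d_pt_Dts sigma sigma_smooth m n t s). Qed.

Ltac solve_continuity_2d :=
  repeat match goal with
  | |- continuity_2d_pt (fun _ _ => ?c) _ _ => apply continuity_2d_pt_const
  | |- continuity_2d_pt (fun u v => @?f u v + @?g u v) _ _ => apply (continuity_2d_pt_plus f g)
  | |- continuity_2d_pt (fun u v => @?f u v - @?g u v) _ _ => apply (continuity_2d_pt_minus f g)
  | |- continuity_2d_pt (fun u v => @?f u v * @?g u v) _ _ => apply (continuity_2d_pt_mult f g)
  | |- continuity_2d_pt (fun u v => @?f u v ^ 2) _ _ => apply (continuity_2d_pt_sqr f)
  | |- continuity_2d_pt (fun u v => sumd _ (fun i => @?F i u v)) _ _ =>
      apply (continuity_2d_pt_sumd _ F); intros ? ?; cbv beta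
  | |- context [sqnorm] => unfold sqnorm
  | H : (?i < d)%nat |- continuity_2d_pt (fun u v => Dts ?m ?n (xi ?i) u v) _ _ =>
      exact (continuity_2d_pt_xi i m n _ _ H)
  | H : (?i < d)%nat |- continuity_2d_pt (fun u v => xi ?i u v) _ _ =>
      exact (continuity_2d_pt_xi i 0 0 _ _ H)
  | |- continuity_2d_pt (fun u v => Dts ?m ?n sigma u v) _ _ => exact (continuity_2d_pt_sigma m n _ _)
  | |- continuity_2d_pt (fun u v => sigma u v) _ _ => exact (continuity_2d_pt_sigma 0 0 _ _)
  | |- continuity_2d_pt (fun u => sigma u) _ _ => exact (continuity_2d_pt_sigma 0 0 _ _)
  end.

Ltac solve_ex_RInt t :=
  match goal with |- ex_RInt ?g ?a ?b =>
    let F := eval pattern t in g in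
    match F with ?F' t =>
      apply (ex_RInt_continuity_2d F' t a b); intros; cbv beta; solve_continuity_2d
    end
  end.

Lemma is_derive_xi_s i m n t s : (i < d)%nat ->
  is_derive (fun v => Dts m n (xi i) t v) s (Dts m (S n) (xi i) t s).
Proof. intros Hi. exact (is_derive_Dts_s (xi i) (xi_smooth i Hi) m n t s). Qed.

Lemma is_derive_xi_t i m n t s : (i < d)%nat ->
  is_derive (fun u => Dts m n (xi i) u s) t (Dts (S m) n (xi i) t s).
Proof. intros Hi. exact (is_derive_Dts_t (xi i) (xi_smooth i Hi) m n t s). Qed.

Lemma is_derive_sigma_s m n t s : is_derive (fun v => Dts m n sigma t v) s (Dts m (S n) sigma t s).
Proof. exact (is_derive_Dts_s sigma sigma_smooth m n t s). Qed.

Lemma tangent_orthogonal t s : 0 <= t ->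
  sumd d (fun i => Dts 0 1 (xi i) t s * Dts 0 2 (xi i) t s) = 0.
Proof.
  intros Ht.
  assert (H : sumd d (fun i => 2 * Dts 0 2 (xi i) t s * Dts 0 1 (xi i) t s) = 0).
  { apply (is_derive_locally_const (fun v => sumd d (fun i => Dts 0 1 (xi i) t v ^ 2)) s 1).
    - apply filter_forall. intros v. now apply tangent_unit.
    - apply (is_derive_sumd d (fun i v => Dts 0 1 (xi i) t v ^ 2)
        (fun i v => 2 * Dts 0 2 (xi i) t v * Dts 0 1 (xi i) t v)).
      intros i Hi. apply is_derive_sqr, is_derive_xi_s, Hi. }
  rewrite (sumd_ext d _ (fun i => 2 * (Dts 0 1 (xi i) t s * Dts 0 2 (xi i) t s))), sumd_scal in H
    by (intros; ring).
  lra.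
Qed.

Lemma tangent_orthogonal_t t s : 0 < t ->
  sumd d (fun i => Dts 0 1 (xi i) t s * Dts 1 1 (xi i) t s) = 0.
Proof.
  intros Ht.
  assert (H : sumd d (fun i => 2 * Dts 1 1 (xi i) t s * Dts 0 1 (xi i) t s) = 0).
  { apply (is_derive_locally_const (fun u => sumd d (fun i => Dts 0 1 (xi i) u s ^ 2)) t 1).
    - apply filter_imp with (2 := locally_pos t Ht). intros u Hu. apply tangent_unit. lra.
    - apply (is_derive_sumd d (fun i u => Dts 0 1 (xi i) u s ^ 2)
        (fun i u => 2 * Dts 1 1 (xi i) u s * Dts 0 1 (xi i) u s)).
      intros i Hi. apply (is_derive_sqr (fun u => Dts 0 1 (xi i) u s)), is_derive_xi_t, Hi. }
  rewrite (sumd_ext d _ (fun i => 2 * (Dts 0 1 (xi i) t s * Dts 1 1 (xi i) t s))), sumd_scal in H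
    by (intros; ring).
  lra.
Qed.

Lemma tangent_orthogonal_tt t s : 0 < t ->
  sumd d (fun i => Dts 0 1 (xi i) t s * Dts 2 1 (xi i) t s) =
  - sumd d (fun i => Dts 1 1 (xi i) t s ^ 2).
Proof.
  intros Ht.
  assert (H : sumd d (fun i => Dts 1 1 (xi i) t s * Dts 1 1 (xi i) t s
                               + Dts 0 1 (xi i) t s * Dts 2 1 (xi i) t s) = 0).
  { apply (is_derive_locally_const
      (fun u => sumd d (fun i => Dts 0 1 (xi i) u s * Dts 1 1 (xi i) u s)) t 0).
    - apply filter_imp with (2 := locally_pos t Ht). intros u Hu. now apply tangent_orthogonal_t.
    - apply (is_derive_sumd d (fun i u => Dts 0 1 (xi i) u s * Dts 1 1 (xi i) u s)
        (fun i u => Dts 1 1 (xi i) u s * Dts 1 1 (xi i) u s + Dts 0 1 (xi i) u s * Dts 2 1 (xi i) u s)).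
      intros i Hi. apply (is_derive_mulR (fun u => Dts 0 1 (xi i) u s) (fun u => Dts 1 1 (xi i) u s));
        apply is_derive_xi_t, Hi. }
  rewrite sumd_plus, (sumd_ext d (fun i => Dts 1 1 (xi i) t s * Dts 1 1 (xi i) t s)
    (fun i => Dts 1 1 (xi i) t s ^ 2)) in H by (intros; ring).
  lra.
Qed.

Lemma velocity_sqnorm t s : 0 <= t ->
  sumd d (fun i => vel i t s ^ 2) =
  Dts 0 1 sigma t s ^ 2 + sigma t s * Dts 0 2 sigma t s + sigma t s.
Proof.
  intros Ht. set (a := Dts 0 1 sigma t s). set (b := sigma t s).
  rewrite (sumd_ext d _ (fun i => a ^ 2 * Dts 0 1 (xi i) t s ^ 2
      + (2 * a * b * (Dts 0 1 (xi i) t s * Dts 0 2 (xi i) t s) + b ^ 2 * Dts 0 2 (xi i) t s ^ 2))).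
  - rewrite !sumd_plus, !sumd_scal, tangent_unit, tangent_orthogonal, sigma_ode by exact Ht.
    fold b. ring.
  - intros i Hi. rewrite velocity_eq by assumption. fold a b. ring.
Qed.

Lemma RInt_xi_dot_velocity_add_sigma t : 0 <= t ->
  RInt (fun v => sumd d (fun i => xi i t v * vel i t v) + sigma t v) 0 1 = 0.
Proof.
  intros Ht.
  apply (RInt_derive_periodic_2d
    (fun u v => sigma u v * sumd d (fun i => xi i u v * Dts 0 1 (xi i) u v))
    (fun u v => sumd d (fun i => xi i u v * vel i u v) + sigma u v)).
  - intros v.
    (* (sigma <xi, xi_s>)_s = sigma_s <xi, xi_s> + sigma (|xi_s|^2 + <xi, xi_ss>)
                            = <xi, vel> + sigma *)
    replace (sumd d (fun i => xi i t v * vel i t v) + sigma t v) with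
      (Dts 0 1 sigma t v * sumd d (fun i => xi i t v * Dts 0 1 (xi i) t v) +
       sigma t v * sumd d (fun i => Dts 0 1 (xi i) t v * Dts 0 1 (xi i) t v
                                   + xi i t v * Dts 0 2 (xi i) t v)).
    + apply (is_derive_mulR (fun w => sigma t w)); [apply (is_derive_sigma_s 0 0)|].
      apply (is_derive_sumd d (fun i w => xi i t w * Dts 0 1 (xi i) t w)
        (fun i w => Dts 0 1 (xi i) t w * Dts 0 1 (xi i) t w + xi i t w * Dts 0 2 (xi i) t w)).
      intros i Hi. apply (is_derive_mulR (fun w => xi i t w));
        [apply (is_derive_xi_s i 0 0) | apply is_derive_xi_s]; exact Hi.
    + rewrite sumd_plus, (sumd_ext d (fun i => Dts 0 1 (xi i) t v * Dts 0 1 (xi i) t v)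
        (fun i => Dts 0 1 (xi i) t v ^ 2)), tangent_unit by (auto; intros; ring).
      rewrite (sumd_ext d (fun i => xi i t v * vel i t v) (fun i =>
        Dts 0 1 sigma t v * (xi i t v * Dts 0 1 (xi i) t v)
        + sigma t v * (xi i t v * Dts 0 2 (xi i) t v))).
      * rewrite sumd_plus, !sumd_scal. ring.
      * intros i Hi. rewrite velocity_eq by assumption. ring.
  - intros v. solve_continuity_2d.
  - cbv beta. rewrite (Dts_sigma_at_1 0 0). f_equal. apply sumd_ext. intros i Hi.
    pose proof (Dts_xi_at_1 i 0 0 t Hi) as E0. change (xi i t 1 = xi i t 0) in E0.
    now rewrite E0, (Dts_xi_at_1 i 0 1 t Hi).
Qed.

Lemma RInt_d_s_sigma_sigma_s t :
  RInt (fun v => Dts 0 1 sigma t v ^ 2 + sigma t v * Dts 0 2 sigma t v) 0 1 = 0.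
Proof.
  apply (RInt_derive_periodic_2d (fun u v => sigma u v * Dts 0 1 sigma u v)
    (fun u v => Dts 0 1 sigma u v ^ 2 + sigma u v * Dts 0 2 sigma u v)).
  - intros v. replace (Dts 0 1 sigma t v ^ 2) with (Dts 0 1 sigma t v * Dts 0 1 sigma t v) by ring.
    apply (is_derive_mulR (fun w => sigma t w));
      [apply (is_derive_sigma_s 0 0) | apply is_derive_sigma_s].
  - intros v. solve_continuity_2d.
  - cbv beta. now rewrite (Dts_sigma_at_1 0 0), (Dts_sigma_at_1 0 1).
Qed.

Lemma RInt_d_s_sigma_xs_dot_dvel t :
  RInt (fun v => Dts 0 1 sigma t v * sumd d (fun i => Dts 0 1 (xi i) t v * dvel i t v)
     + sigma t v * sumd d (fun i =>
          Dts 0 2 (xi i) t v * dvel i t v + Dts 0 1 (xi i) t v * dvel_s i t v))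
    0 1 = 0.
Proof.
  apply (RInt_derive_periodic_2d
    (fun u v => sigma u v * sumd d (fun i => Dts 0 1 (xi i) u v * dvel i u v))
    (fun u v => Dts 0 1 sigma u v * sumd d (fun i => Dts 0 1 (xi i) u v * dvel i u v)
     + sigma u v * sumd d (fun i =>
          Dts 0 2 (xi i) u v * dvel i u v + Dts 0 1 (xi i) u v * dvel_s i u v))).
  - intros v. apply (is_derive_mulR (fun w => sigma t w)); [apply (is_derive_sigma_s 0 0)|].
    apply (is_derive_sumd d (fun i w => Dts 0 1 (xi i) t w * dvel i t w)
      (fun i w => Dts 0 2 (xi i) t w * dvel i t w + Dts 0 1 (xi i) t w * dvel_s i t w)).
    intros i Hi. apply (is_derive_mulR (fun w => Dts 0 1 (xi i) t w) (fun w => dvel i t w));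
      [apply is_derive_xi_s, Hi|].
    apply (is_derive_minus (fun w => Dts 2 0 (xi i) t w) (fun w => Dts 1 0 (xi i) t w));
      apply is_derive_xi_s, Hi.
  - intros v. solve_continuity_2d.
  - cbv beta. rewrite (Dts_sigma_at_1 0 0). f_equal. apply sumd_ext. intros i Hi.
    now rewrite (Dts_xi_at_1 i 0 1), (Dts_xi_at_1 i 2 0), (Dts_xi_at_1 i 1 0).
Qed.

Lemma sigma_pos t s : 0 <= t -> 0 <= s <= 1 -> 0 < sigma t s.
Proof.
  intros Ht. apply (periodic_min_principle (fun v => sigma t v) (fun v => Dts 0 1 sigma t v)
    (fun v => Dts 0 2 sigma t v) (fun v => sumd d (fun i => Dts 0 2 (xi i) t v ^ 2))).
  - intros v. apply (is_derive_sigma_s 0 0).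
  - intros v. apply is_derive_sigma_s.
  - intros v. apply sigma_periodic.
  - intros v. apply sumd_ge0. intros; apply pow2_ge_0.
  - intros v. now apply sigma_ode.
Qed.

Definition energy t : R := RInt (sqnorm d xi t) 0 1.
Definition sigma_mean t : R := RInt (sigma t) 0 1.
Definition velocity_energy t : R := RInt (fun s => sumd d (fun i => vel i t s ^ 2)) 0 1.

Lemma velocity_energy_eq t : 0 <= t -> velocity_energy t = sigma_mean t.
Proof.
  intros Ht. unfold velocity_energy, sigma_mean.
  rewrite (RInt_extR _
    (fun v => (Dts 0 1 sigma t v ^ 2 + sigma t v * Dts 0 2 sigma t v) + sigma t v))
    by (intros; now apply velocity_sqnorm).
  rewrite RInt_plusR, RInt_d_s_sigma_sigma_s by solve_ex_RInt t. apply Rplus_0_l.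
Qed.

Lemma energy_sub_sigma_mean t : 0 <= t ->
  energy t - sigma_mean t = RInt (fun v => sumd d (fun i => Dts 1 0 (xi i) t v ^ 2)) 0 1.
Proof.
  intros Ht.
  rewrite (RInt_extR _ (fun v =>
    (sqnorm d xi t v + 2 * (sumd d (fun i => xi i t v * vel i t v) + sigma t v))
    + (sumd d (fun i => vel i t v ^ 2) - 2 * sigma t v))).
  - rewrite RInt_plusR, RInt_plusR, RInt_scalR, RInt_minusR, RInt_scalR by solve_ex_RInt t.
    rewrite RInt_xi_dot_velocity_add_sigma by exact Ht.
    fold (energy t) (sigma_mean t) (velocity_energy t). rewrite velocity_energy_eq by exact Ht. ring.
  - intros v _. unfold sqnorm.
    rewrite (sumd_ext d (fun i => Dts 1 0 (xi i) t v ^ 2)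
      (fun i => xi i t v ^ 2 + 2 * (xi i t v * vel i t v) + vel i t v ^ 2)) by (intros; ring).
    rewrite !sumd_plus, sumd_scal. ring.
Qed.

Lemma sigma_mean_le_energy t : 0 <= t -> sigma_mean t <= energy t.
Proof.
  intros Ht. cut (0 <= energy t - sigma_mean t); [lra|].
  rewrite energy_sub_sigma_mean by exact Ht.
  apply RInt_ge_0; [lra | solve_ex_RInt t | intros; apply sumd_ge0; intros; apply pow2_ge_0].
Qed.

Lemma is_derive_energy t : 0 <= t -> is_derive energy t (2 * (energy t - sigma_mean t)).
Proof.
  intros Ht.
  assert (Hrate : RInt (fun v => sumd d (fun i => 2 * Dts 1 0 (xi i) t v * xi i t v)) 0 1
                  = 2 * (energy t - sigma_mean t) :> R).
  { rewrite (RInt_extR _ (fun v =>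
      (2 * sqnorm d xi t v + 2 * (sumd d (fun i => xi i t v * vel i t v) + sigma t v))
      - 2 * sigma t v)).
    - rewrite RInt_minusR, RInt_plusR, !RInt_scalR by solve_ex_RInt t.
      rewrite RInt_xi_dot_velocity_add_sigma by exact Ht. unfold energy, sigma_mean. ring.
    - intros v _. unfold sqnorm. rewrite <- sumd_scal.
      rewrite (sumd_ext d (fun i => 2 * Dts 1 0 (xi i) t v * xi i t v)
        (fun i => 2 * xi i t v ^ 2 + 2 * (xi i t v * vel i t v))) by (intros; ring).
      rewrite sumd_plus, (sumd_scal d 2 (fun i => xi i t v * vel i t v)). ring. }
  rewrite <- Hrate. unfold energy.
  apply (is_derive_RInt_param_2d (sqnorm d xi)
    (fun u v => sumd d (fun i => 2 * Dts 1 0 (xi i) u v * xi i u v))).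
  - intros u v. apply (is_derive_sumd d (fun i z => xi i z v ^ 2)
      (fun i z => 2 * Dts 1 0 (xi i) z v * xi i z v)).
    intros i Hi. apply (is_derive_sqr (fun z => xi i z v)), (is_derive_xi_t i 0 0), Hi.
  - intros; solve_continuity_2d.
  - intros; solve_continuity_2d.
Qed.

Lemma is_derive_velocity_energy t :
  is_derive velocity_energy t (RInt (fun v => sumd d (fun i => 2 * dvel i t v * vel i t v)) 0 1).
Proof.
  unfold velocity_energy. apply (is_derive_RInt_param_2d (fun u v => sumd d (fun i => vel i u v ^ 2))
    (fun u v => sumd d (fun i => 2 * dvel i u v * vel i u v))).
  - intros u v.
    apply (is_derive_sumd d (fun i z => vel i z v ^ 2) (fun i z => 2 * dvel i z v * vel i z v)).
    intros i Hi. apply (is_derive_sqr (fun z => vel i z v)).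
    apply (is_derive_minus (fun z => Dts 1 0 (xi i) z v) (fun z => xi i z v));
      [apply (is_derive_xi_t i 1 0) | apply (is_derive_xi_t i 0 0)]; exact Hi.
  - intros; solve_continuity_2d.
  - intros; solve_continuity_2d.
Qed.

Lemma velocity_energy_rate_nonneg t : 0 < t ->
  0 <= RInt (fun v => sumd d (fun i => 2 * dvel i t v * vel i t v)) 0 1.
Proof.
  intros Ht.
  (* <dvel, vel> = <dvel, (sigma xi_s)_s> is a total s-derivative plus sigma |xi_ts|^2 *)
  rewrite (RInt_extR _ (fun v =>
    2 * (Dts 0 1 sigma t v * sumd d (fun i => Dts 0 1 (xi i) t v * dvel i t v)
      + sigma t v * sumd d (fun i =>
          Dts 0 2 (xi i) t v * dvel i t v + Dts 0 1 (xi i) t v * dvel_s i t v))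
    + 2 * (sigma t v * sumd d (fun i => Dts 1 1 (xi i) t v ^ 2)))).
  - rewrite RInt_plusR, !RInt_scalR, RInt_d_s_sigma_xs_dot_dvel by solve_ex_RInt t.
    assert (0 <= RInt (fun v => sigma t v * sumd d (fun i => Dts 1 1 (xi i) t v ^ 2)) 0 1).
    { apply RInt_ge_0; [lra | solve_ex_RInt t|]. intros v Hv. apply Rmult_le_pos.
      - apply Rlt_le, sigma_pos; lra.
      - apply sumd_ge0. intros; apply pow2_ge_0. }
    lra.
  - intros v _.
    rewrite (sumd_ext d (fun i => 2 * dvel i t v * vel i t v) (fun i =>
      (2 * Dts 0 1 sigma t v) * (Dts 0 1 (xi i) t v * dvel i t v)
      + (2 * sigma t v) * (Dts 0 2 (xi i) t v * dvel i t v)))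
      by (intros i Hi; rewrite velocity_eq by (auto; lra); ring).
    rewrite !sumd_plus, (sumd_ext d (fun i => Dts 0 1 (xi i) t v * dvel_s i t v) (fun i =>
      Dts 0 1 (xi i) t v * Dts 2 1 (xi i) t v - Dts 0 1 (xi i) t v * Dts 1 1 (xi i) t v))
      by (intros; ring).
    rewrite !sumd_scal, sumd_minus, tangent_orthogonal_tt, tangent_orthogonal_t by exact Ht.
    ring.
Qed.

Lemma energy_nondecreasing t1 t2 : 0 <= t1 -> t1 <= t2 -> energy t1 <= energy t2.
Proof.
  apply (nondecreasing_of_derive_nonneg energy (fun t => 2 * (energy t - sigma_mean t))).
  - exact is_derive_energy.
  - intros t Ht. pose proof (sigma_mean_le_energy t ltac:(lra)). lra.
Qed.

Lemma sigma_mean_nondecreasing t1 t2 : 0 <= t1 -> t1 <= t2 -> sigma_mean t1 <= sigma_mean t2.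
Proof.
  intros H1 H12. rewrite <- !velocity_energy_eq by lra.
  apply (nondecreasing_of_derive_nonneg velocity_energy
    (fun t => RInt (fun v => sumd d (fun i => 2 * dvel i t v * vel i t v)) 0 1)); auto.
  - intros t _. apply is_derive_velocity_energy.
  - exact velocity_energy_rate_nonneg.
Qed.

Lemma energy_le t : 0 <= t -> energy t <= 1 / (4 * PI ^ 2).
Proof.
  intros Ht. pose proof PI_RGT_0 as Hpi.
  assert (H : 4 * PI ^ 2 * energy t <= 1).
  { unfold energy, sqnorm. rewrite RInt_sumd by (intros; solve_ex_RInt t). rewrite <- sumd_scal.
    apply Rle_trans with (sumd d (fun i => RInt (fun s => Dts 0 1 (xi i) t s ^ 2) 0 1)).
    - apply sumd_le. intros i Hi.
      apply (wirtinger (fun s => xi i t s) (fun s => Dts 0 1 (xi i) t s)).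
      + intros s. apply (is_derive_xi_s i 0 0), Hi.
      + intros s. apply (continuity_2d_pt_snd (Dts 0 1 (xi i))), continuity_2d_pt_xi, Hi.
      + intros s. now apply xi_periodic.
      + now apply xi_mean.
    - rewrite <- RInt_sumd by (intros; solve_ex_RInt t).
      rewrite (RInt_extR _ (fun _ => 1)) by (intros; now apply tangent_unit).
      rewrite RInt_constR. lra. }
  apply (Rmult_le_reg_l (4 * PI ^ 2)); [nra|].
  replace (4 * PI ^ 2 * (1 / (4 * PI ^ 2))) with 1 by (field; nra). exact H.
Qed.

End NormalizedFlow.

Theorem proposition3p1 (d : nat) (xi : nat -> R -> R -> R) (sigma : R -> R -> R) :
  (2 <= d)%nat ->
  normalized_flow d xi sigma ->
  let E := fun t => RInt (fun s => sqnorm d xi t s) 0 1 in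
  let S := fun t => RInt (fun s => sigma t s) 0 1 in
  (* (i) *)
  ((forall t1 t2, 0 <= t1 -> t1 <= t2 -> E t1 <= E t2) /\
   (forall t, 0 <= t -> E t <= 1 / (4 * PI ^ 2))) /\
  (* (ii) *)
  ((forall t1 t2, 0 <= t1 -> t1 <= t2 -> S t1 <= S t2) /\
   (forall t, 0 <= t -> S t <= E t)) /\
  (* (iii) *)
  (exists L : R, is_lim S p_infty L /\ is_lim E p_infty L).
Proof.
  intros _ Hflow E S.
  pose proof (energy_nondecreasing d xi sigma Hflow) as Emono.
  pose proof (energy_le d xi sigma Hflow) as Ebound.
  pose proof (sigma_mean_nondecreasing d xi sigma Hflow) as Smono.
  pose proof (sigma_mean_le_energy d xi sigma Hflow) as SleE.
  split; [split; assumption | split; [split; assumption |]].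
  destruct (is_lim_nondecreasing_bounded (energy d xi) _ Emono Ebound) as [LE HLE].
  destruct (is_lim_nondecreasing_bounded (sigma_mean sigma) (1 / (4 * PI ^ 2)) Smono) as [LS HLS].
  { intros t Ht. apply Rle_trans with (energy d xi t); auto. }
  exists LE. split; [|exact HLE].
  replace LE with LS; [exact HLS|].
  apply (is_lim_eq_of_derive_gap (energy d xi) (sigma_mean sigma) LE LS).
  - exact (is_derive_energy d xi sigma Hflow).
  - exact HLE.
  - exact HLS.
  - exact (is_lim_le_p_infty _ _ _ _ SleE HLS HLE).
Qed.
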